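(* For a semiring $(S,+,\cdot)$ the following are equivalent: (i) $S$ is a quasi completely regular semiring and $E^+(S)$ is a subsemigroup of $(S,+)$; (ii) $S$ is additively quasi regular, $b^2\,\mathscr{H}^{*^{+}}\,b$ for all $b\in S$, for all $a,x\in S$ $a=a+x+a$ implies $a=a+2x+2a$, and $Reg^+S$ is a subsemigroup of $(S,+)$; (iii) $S$ is a b-lattice of nil-extensions of rectangular skew-rings and $E^+(S)$ is a subsemigroup of $(S,+)$.
   Context: A semiring $(S,+,\cdot)$ has two associative operations with $a(b+c)=ab+ac$, $(b+c)a=ba+ca$. $na$ is the $n$-fold sum of $a$; $b^2=b\cdot b$. $E^+(S)$ is the set of additive idempotents; $Reg^+S$ is the set of additively regular elements, where $a$ is additively regular if $a=a+x+a$ for some $x\in S$. $S$ is additively quasi regular if for each $a$ some $na$ is additively regular. $a$ is completely regular if there is $x$ with $a=a+x+a$, $a+x=x+a$, $a(a+x)=a+x$; $S$ is quasi completely regular if for each $a$ some $na$ is completely regular. Green's relations of $(S,+)$: $\mathscr{L}^+,\mathscr{R}^+,\mathscr{J}^+$. For additively quasi regular $S$, $m(a)$ is the least positive integer with $m(a)a$ additively regular; $a\,\mathscr{L}^{*^{+}}\,b$ iff $m(a)a\,\mathscr{L}^+\,m(b)b$, $a\,\mathscr{R}^{*^{+}}\,b$ iff $m(a)a\,\mathscr{R}^+\,m(b)b$, $\mathscr{H}^{*^{+}}=\mathscr{L}^{*^{+}}\cap\mathscr{R}^{*^{+}}$. A completely simple semiring: all elements completely regular and $\mathscr{J}^+=S\times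 S$. A rectangular skew-ring: completely simple semiring $K$ with $E^+(K)$ a subsemigroup of $(K,+)$. $S$ is a nil-extension of a subsemiring $K$ if $K$ is a bi-ideal ($a\in K,x\in S\Rightarrow a+x,x+a,ax,xa\in K$) and every $a\in S$ has some $na\in K$. A b-lattice is a semiring with $(S,\cdot)$ a band and $(S,+)$ a semilattice; $S$ is a b-lattice of semirings of a class if there is a congruence $\rho$ with $S/\rho$ a b-lattice and each $\rho$-class a subsemiring in that class. *)

(* No zero, no identity, no commutativity of + is assumed (as in the paper). *)
From Stdlib Require Import Arith.

Set Implicit Arguments.

Section Semiring.
Context {T : Type} (add mul : T -> T -> T).

Local Infix "+" := add.
Local Infix "*" := mul.

Definition is_semiring : Prop :=
  (forall a b c, a + (b + c) = (a + b) + c) /\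
  (forall a b c, a * (b * c) = (a * b) * c) /\
  (forall a b c, a * (b + c) = a * b + a * c) /\
  (forall a b c, (b + c) * a = b * a + c * a).

(* n-fold sum n a = a + ... + a (n terms), meaningful for n >= 1 *)
Fixpoint nsum (n : nat) (a : T) : T :=
  match n with
  | O => a
  | S k => match k with O => a | _ => nsum k a + a end
  end.

Definition closed_add (P : T -> Prop) : Prop :=
  forall a b, P a -> P b -> P (a + b).

Definition subsemiring (P : T -> Prop) : Prop :=
  closed_add P /\ (forall a b, P a -> P b -> P (a * b)).

Definition Eplus (P : T -> Prop) (a : T) : Prop := P a /\ a + a = a.

Definition add_regular (a : T) : Prop := exists x, a = a + x + a.

Definition RegPlus (a : T) : Prop := add_regular a.

Definition add_quasi_regular : Prop :=
  forall a, exists n, 0 < n /\ add_regular (nsum n a).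

Definition cregular_in (P : T -> Prop) (a : T) : Prop :=
  exists x, P x /\ a = a + x + a /\ a + x = x + a /\ a * (a + x) = a + x.

Definition quasi_completely_regular : Prop :=
  forall a, exists n, 0 < n /\ cregular_in (fun _ => True) (nsum n a).

(* principal ideals of the semigroup (P,+):  c in P^1 + a,  a + P^1,  P^1 + a + P^1 *)
Definition in_left_ideal (P : T -> Prop) (a c : T) : Prop :=
  c = a \/ exists u, P u /\ c = u + a.
Definition in_right_ideal (P : T -> Prop) (a c : T) : Prop :=
  c = a \/ exists u, P u /\ c = a + u.
Definition in_ideal (P : T -> Prop) (a c : T) : Prop :=
  c = a \/ (exists u, P u /\ c = u + a) \/ (exists v, P v /\ c = a + v)
  \/ (exists u v, P u /\ P v /\ c = u + a + v).

Definition Lplus (a b : T) : Prop :=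
  forall c, in_left_ideal (fun _ => True) a c <-> in_left_ideal (fun _ => True) b c.
Definition Rplus (a b : T) : Prop :=
  forall c, in_right_ideal (fun _ => True) a c <-> in_right_ideal (fun _ => True) b c.
Definition Jplus_in (P : T -> Prop) (a b : T) : Prop :=
  forall c, in_ideal P a c <-> in_ideal P b c.

Definition is_m (a : T) (n : nat) : Prop :=
  0 < n /\ add_regular (nsum n a) /\
  (forall k, 0 < k -> k < n -> ~ add_regular (nsum k a)).

Definition Lstar (a b : T) : Prop :=
  exists n m, is_m a n /\ is_m b m /\ Lplus (nsum n a) (nsum m b).
Definition Rstar (a b : T) : Prop :=
  exists n m, is_m a n /\ is_m b m /\ Rplus (nsum n a) (nsum m b).
Definition Hstar (a b : T) : Prop := Lstar a b /\ Rstar a b.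

Definition completely_simple (K : T -> Prop) : Prop :=
  subsemiring K /\
  (forall a, K a -> cregular_in K a) /\
  (forall a b, K a -> K b -> Jplus_in K a b).

Definition rect_skew_ring (K : T -> Prop) : Prop :=
  completely_simple K /\ closed_add (Eplus K).

Definition nil_extension (Q K : T -> Prop) : Prop :=
  subsemiring K /\ (forall a, K a -> Q a) /\
  (forall a x, K a -> Q x ->
     K (a + x) /\ K (x + a) /\ K (a * x) /\ K (x * a)) /\
  (forall a, Q a -> exists n, 0 < n /\ K (nsum n a)).

Definition blattice_of_nilext_rsr : Prop :=
  exists rho : T -> T -> Prop,
    (forall a, rho a a) /\
    (forall a b, rho a b -> rho b a) /\
    (forall a b c, rho a b -> rho b c -> rho a c) /\
    (forall a b c d, rho a b -> rho c d -> rho (a + c) (b + d)) /\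
    (forall a b c d, rho a b -> rho c d -> rho (a * c) (b * d)) /\
    (* S/rho is a b-lattice: (S/rho,.) band, (S/rho,+) semilattice *)
    (forall a, rho (a * a) a) /\
    (forall a, rho (a + a) a) /\
    (forall a b, rho (a + b) (b + a)) /\
    (forall a, subsemiring (rho a) /\
       exists K : T -> Prop, rect_skew_ring K /\ nil_extension (rho a) K).

End Semiring.

From Stdlib Require Import Arith Lia Classical ClassicalEpsilon.

(* Under (i), some multiple of each a lies in a subgroup of (S,+) whose identity
   gidem a depends only on a.  Complete regularity gives gidem a = a * gidem a, and
   with the closure of E^+(S) this makes gidem a semiring morphism onto the band
   of additive idempotents.  Pulling back the D-relation of that band
   (e + f + e = e and f + e + f = f) yields a congruence rho with b-lattice
   quotient; in each rho-class the regular elements form a rectangular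
   skew-ring, of which the class is a nil-extension.  The conditions of (ii) are
   read off through gidem: a regular element lies in the group of its gidem, and
   a + x = gidem a + gidem x whenever a = a + x + a.
   Conversely, applying a = a + 2x + 2a to a and to its inverse x + a + x shows
   that a regular element generates the same one-sided ideals as its double,
   hence lies in a subgroup of (S,+); and b^2 H* b forces the identity e of the
   group of n a to satisfy (n a) e = e, which is complete regularity. *)

Section Semiring.
Context {T : Type} (add mul : T -> T -> T).
Local Infix "+" := add.
Local Infix "*" := mul.
Hypothesis addA : forall a b c, a + (b + c) = a + b + c.
Hypothesis mulDr : forall a b c, a * (b + c) = a * b + a * c.
Hypothesis mulDl : forall a b c, (b + c) * a = b * a + c * a.

Ltac assoc := repeat rewrite addA; reflexivity.

Lemma nsum_succ n a : 0 < n -> nsum add (S n) a = nsum add n a + a.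
Proof. intros Hn; destruct n; [lia | reflexivity]. Qed.

Lemma nsum_add p q a : 0 < p -> 0 < q ->
  nsum add (p + q)%nat a = nsum add p a + nsum add q a.
Proof.
  intros Hp Hq; induction q as [|[|q] IH]; [lia| |].
  - rewrite Nat.add_1_r, nsum_succ by lia; reflexivity.
  - rewrite <- plus_n_Sm, !nsum_succ, IH by lia; assoc.
Qed.

Lemma nsum_succ_l n a : 0 < n -> nsum add (S n) a = a + nsum add n a.
Proof. intros Hn; rewrite <- Nat.add_1_l, nsum_add by lia; reflexivity. Qed.

Lemma nsum_mul k m a : 0 < k -> 0 < m ->
  nsum add k (nsum add m a) = nsum add (k * m)%nat a.
Proof.
  intros Hk Hm; induction k as [|[|k] IH]; [lia | now rewrite Nat.mul_1_l |].
  rewrite nsum_succ, IH, <- nsum_add by nia; f_equal; lia.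
Qed.

Lemma nsum_comm k m a : 0 < k -> 0 < m ->
  nsum add k (nsum add m a) = nsum add m (nsum add k a).
Proof. intros; rewrite !nsum_mul by lia; f_equal; lia. Qed.

Lemma nsum_idem n e : e + e = e -> nsum add n e = e.
Proof.
  intros He; induction n as [|[|n] IH]; [reflexivity | reflexivity |].
  rewrite nsum_succ, IH by lia; exact He.
Qed.

Lemma mul_nsum_r n c a : c * nsum add n a = nsum add n (c * a).
Proof.
  induction n as [|[|n] IH]; [reflexivity | reflexivity |].
  rewrite !nsum_succ, mulDr, IH by lia; reflexivity.
Qed.

Lemma mul_nsum_l n c a : nsum add n a * c = nsum add n (a * c).
Proof.
  induction n as [|[|n] IH]; [reflexivity | reflexivity |].
  rewrite !nsum_succ, mulDl, IH by lia; reflexivity.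
Qed.

Definition in_group (e c : T) : Prop :=
  e + e = e /\ e + c = c /\ c + e = c /\ exists y, c + y = e /\ y + c = e.

Lemma in_group_idem e : e + e = e -> in_group e e.
Proof. intros He; repeat split; try exact He; exists e; split; exact He. Qed.

Lemma in_group_regular e c : in_group e c -> add_regular add c.
Proof. intros (_ & He & _ & y & Hy & _); exists y; rewrite Hy, He; reflexivity. Qed.

Lemma in_group_unique e f c : in_group e c -> in_group f c -> e = f.
Proof.
  intros (_ & _ & Hce & y & Hy & _) (_ & Hfc & _ & z & _ & Hz).
  transitivity (f + e).
  - rewrite <- Hy, addA, Hfc; reflexivity.
  - rewrite <- Hz, <- addA, Hce; reflexivity.
Qed.

Lemma in_group_nsum e c k : in_group e c -> 0 < k -> in_group e (nsum add k c).
Proof.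
  intros Hc Hk; induction k as [|[|k] IH]; [lia | exact Hc |].
  rewrite nsum_succ by lia.
  destruct Hc as (He & Hec & Hce & y & Hcy & Hyc).
  destruct (IH ltac:(lia)) as (_ & Hes & Hse & w & Hsw & Hws).
  set (s := nsum add (S k) c) in *.
  split; [exact He|]. split; [rewrite addA, Hes; reflexivity|].
  split; [rewrite <- addA, Hce; reflexivity|].
  exists (y + w); split.
  - transitivity (s + (c + y) + w); [assoc|]. rewrite Hcy, Hse; exact Hsw.
  - transitivity (y + (w + s) + c); [assoc|]. rewrite Hws, <- addA, Hec; exact Hyc.
Qed.

Lemma in_group_inverse e c : in_group e c ->
  exists y, in_group e y /\ c + y = e /\ y + c = e.
Proof.
  intros (He & Hec & Hce & y & Hcy & Hyc).
  assert (Hl : c + (e + y + e) = e).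
  { transitivity (c + e + y + e); [assoc|]. rewrite Hce, Hcy; exact He. }
  assert (Hr : e + y + e + c = e).
  { transitivity (e + y + (e + c)); [assoc|]. rewrite Hec, <- addA, Hyc; exact He. }
  exists (e + y + e); split; [|split; assumption].
  split; [exact He|]. split; [rewrite !addA, He; reflexivity|].
  split; [rewrite <- addA, He; reflexivity|].
  exists c; split; assumption.
Qed.

Lemma in_group_of_double a u v : a = v + a + a -> a = a + a + u -> in_group (a + u) a.
Proof.
  intros Hv Hu.
  assert (Hvu : v + a = a + u).
  { rewrite Hu at 1; transitivity (v + a + a + u); [assoc|]; rewrite <- Hv; reflexivity. }
  assert (Hea : a + u + a = a) by (rewrite <- Hvu; symmetry; exact Hv).
  assert (Hae : a + (a + u) = a) by (rewrite addA; symmetry; exact Hu).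
  split; [|split; [exact Hea | split; [exact Hae|]]].
  - rewrite <- Hvu at 1; rewrite <- addA, Hae, Hvu; reflexivity.
  - exists (v + a + u); split.
    + rewrite Hvu; transitivity (a + a + u + u); [assoc|]; rewrite <- Hu; reflexivity.
    + transitivity (v + (a + u + a)); [assoc|]; rewrite Hea, Hvu; reflexivity.
Qed.

Lemma in_group_mul_l e c t : in_group e c -> in_group (e * t) (c * t).
Proof.
  intros (He & Hec & Hce & y & Hcy & Hyc).
  repeat split; try (rewrite <- mulDl; congruence).
  exists (y * t); split; rewrite <- mulDl; congruence.
Qed.

Lemma in_group_mul_r e c t : in_group e c -> in_group (t * e) (t * c).
Proof.
  intros (He & Hec & Hce & y & Hcy & Hyc).
  repeat split; try (rewrite <- mulDr; congruence).
  exists (t * y); split; rewrite <- mulDr; congruence.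
Qed.

Lemma in_left_ideal_sub u v s : u = s + v ->
  forall c, in_left_ideal add (fun _ => True) u c -> in_left_ideal add (fun _ => True) v c.
Proof.
  intros Hu c [->|[w [_ ->]]]; right.
  - exists s; split; auto.
  - exists (w + s); split; auto. rewrite Hu; assoc.
Qed.

Lemma in_right_ideal_sub u v s : u = v + s ->
  forall c, in_right_ideal add (fun _ => True) u c -> in_right_ideal add (fun _ => True) v c.
Proof.
  intros Hu c [->|[w [_ ->]]]; right.
  - exists s; split; auto.
  - exists (s + w); split; auto. rewrite Hu; assoc.
Qed.

Lemma in_group_Lplus e u v : in_group e u -> in_group e v -> Lplus add u v.
Proof.
  intros (_ & _ & Hue & yu & _ & Hyu) (_ & _ & Hve & yv & _ & Hyv) c; split.
  - apply (in_left_ideal_sub u v (u + yv)); rewrite <- addA, Hyv; symmetry; exact Hue.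
  - apply (in_left_ideal_sub v u (v + yu)); rewrite <- addA, Hyu; symmetry; exact Hve.
Qed.

Lemma in_group_Rplus e u v : in_group e u -> in_group e v -> Rplus add u v.
Proof.
  intros (_ & Heu & _ & yu & Huy & _) (_ & Hev & _ & yv & Hvy & _) c; split.
  - apply (in_right_ideal_sub u v (yv + u)); rewrite addA, Hvy; symmetry; exact Heu.
  - apply (in_right_ideal_sub v u (yu + v)); rewrite addA, Huy; symmetry; exact Hev.
Qed.

Lemma in_ideal_sub (P : T -> Prop) b c u v : closed_add add P -> P u -> P v ->
  b = u + c + v -> forall w, in_ideal add P b w -> in_ideal add P c w.
Proof.
  intros HP Hu Hv Hb w Hw; right; right; right.
  destruct Hw as [->|[[u1 [Hu1 ->]]|[[v1 [Hv1 ->]]|[u1 [v1 [Hu1 [Hv1 ->]]]]]]].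
  - exists u, v; auto.
  - exists (u1 + u), v; repeat split; auto. rewrite Hb; assoc.
  - exists u, (v + v1); repeat split; auto. rewrite Hb; assoc.
  - exists (u1 + u), (v + v1); repeat split; auto. rewrite Hb; assoc.
Qed.

Definition group_idem (a e : T) : Prop := exists n, 0 < n /\ in_group e (nsum add n a).

Lemma group_idem_unique a e f : group_idem a e -> group_idem a f -> e = f.
Proof.
  intros (n & Hn & He) (m & Hm & Hf).
  apply (in_group_unique e f (nsum add m (nsum add n a))).
  - apply in_group_nsum; assumption.
  - rewrite nsum_comm by assumption; apply in_group_nsum; assumption.
Qed.

Lemma group_idem_of_in_group e c : in_group e c -> group_idem c e.
Proof. intros Hc; exists 1; split; [lia | exact Hc]. Qed.

Lemma regular_mul_l b t : add_regular add b -> add_regular add (b * t).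
Proof. intros [w Hw]; exists (w * t); rewrite <- !mulDl, <- Hw; reflexivity. Qed.

Lemma regular_mul_r b t : add_regular add b -> add_regular add (t * b).
Proof. intros [w Hw]; exists (t * w); rewrite <- !mulDr, <- Hw; reflexivity. Qed.

Lemma idem_regular e : e + e = e -> add_regular add e.
Proof. intros He; exists e; rewrite !He; reflexivity. Qed.

Lemma regular_inverse a x : a = a + x + a ->
  let x' := x + a + x in a = a + x' + a /\ x' = x' + a + x'.
Proof.
  intros Hx x'; subst x'; split.
  - transitivity (a + x + a + x + a); [|assoc]. rewrite <- !Hx; reflexivity.
  - symmetry; transitivity (x + (a + x + a) + x + a + x); [assoc|]. rewrite <- Hx.
    transitivity (x + (a + x + a) + x); [assoc|]. rewrite <- Hx; reflexivity.
Qed.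

Lemma is_m_exists a n : 0 < n -> add_regular add (nsum add n a) -> exists m, is_m add a m.
Proof.
  induction n as [n IH] using lt_wf_ind; intros Hn Hr.
  destruct (classic (exists k, 0 < k /\ k < n /\ add_regular add (nsum add k a)))
    as [(k & Hk & Hkn & Hkr) | Hmin].
  - exact (IH k Hkn Hk Hkr).
  - exists n; repeat split; try assumption.
    intros k Hk Hkn Hkr; apply Hmin; exists k; auto.
Qed.

(* For idempotents of a band, [Jle e f] says that [e] lies in the ideal generated by [f]. *)
Definition Jle (e f : T) : Prop := e + f + e = e.

Lemma Jle_mul_l e f g : Jle e f -> Jle (e * g) (f * g).
Proof. unfold Jle; intros H; rewrite <- !mulDl, H; reflexivity. Qed.

Lemma Jle_mul_r e f g : Jle e f -> Jle (g * e) (g * f).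
Proof. unfold Jle; intros H; rewrite <- !mulDr, H; reflexivity. Qed.

Section Band.
Hypothesis idem_add : forall e f, e + e = e -> f + f = f -> e + f + (e + f) = e + f.

Lemma regular_add a b : add_regular add a -> add_regular add b -> add_regular add (a + b).
Proof.
  intros [a' Ha] [b' Hb]; exists (b' + a').
  assert (Ea : a = a + (a' + a)) by (rewrite addA; exact Ha).
  assert (Eb : b = b + b' + b) by exact Hb.
  assert (Hf : a' + a + (b + b') + (a' + a + (b + b')) = a' + a + (b + b')).
  { apply idem_add.
    - transitivity (a' + (a + a' + a)); [assoc|]; rewrite <- Ha; reflexivity.
    - transitivity (b + b' + b + b'); [assoc|]; rewrite <- Hb; reflexivity. }
  symmetry; transitivity ((a + (a' + a)) + (b + b') + (a' + a) + ((b + b') + b)).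
  { rewrite <- Ea, <- Eb; assoc. }
  transitivity (a + (a' + a + (b + b') + (a' + a + (b + b'))) + b); [assoc|].
  rewrite Hf; transitivity ((a + (a' + a)) + ((b + b') + b)); [assoc|].
  rewrite <- Ea, <- Eb; reflexivity.
Qed.

Lemma Jle_refl e : e + e = e -> Jle e e.
Proof. intros He; unfold Jle; rewrite !He; reflexivity. Qed.

Lemma Jle_trans e f g : e + e = e -> f + f = f -> g + g = g ->
  Jle e f -> Jle f g -> Jle e g.
Proof.
  unfold Jle; intros He Hf Hg Hef Hfg.
  assert (Hgfe : g + f + e + (g + f + e) = g + f + e) by auto.
  assert (Hefeg : e + f + e + g + (e + f + e + g) = e + f + e + g) by auto.
  transitivity (e + g + (e + f + e)); [rewrite Hef; reflexivity|].
  transitivity (e + g + e + (f + g + f) + e); [rewrite Hfg; assoc|].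
  transitivity (e + g + e + f + (g + f + e + (g + f + e))); [rewrite Hgfe; assoc|].
  transitivity (e + g + e + f + e + g + f + e).
  { transitivity (e + g + e + (f + g + f) + e + g + f + e); [assoc|]; rewrite Hfg; assoc. }
  transitivity ((e + f + e) + g + e + f + e + g + f + e); [rewrite Hef; assoc|].
  transitivity (e + f + e + g + (e + f + e + g) + f + e); [assoc|]; rewrite Hefeg.
  transitivity (e + (f + g + f) + e + g + f + e); [rewrite Hfg; assoc|].
  transitivity (e + f + (g + f + e + (g + f + e))); [assoc|]; rewrite Hgfe.
  transitivity (e + (f + g + f) + e); [assoc|]; rewrite Hfg; exact Hef.
Qed.

Lemma Jle_add x f g : x + x = x -> f + f = f -> g + g = g ->
  Jle x f -> Jle x g -> Jle x (f + g).
Proof.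
  unfold Jle; intros Hx Hf Hg Hxf Hxg; rewrite addA.
  assert (Hgxf : g + x + f + (g + x + f) = g + x + f) by auto.
  transitivity (x + f + g + (x + f + x)); [rewrite Hxf; reflexivity|].
  transitivity ((x + g + x) + f + g + (x + f + x)); [rewrite Hxg; reflexivity|].
  transitivity (x + (g + x + f + (g + x + f)) + x); [assoc|]; rewrite Hgxf.
  transitivity ((x + g + x) + f + x); [assoc|]; rewrite Hxg; exact Hxf.
Qed.

Lemma Jle_add_l e g : e + e = e -> g + g = g -> Jle (e + g) e.
Proof.
  unfold Jle; intros He Hg.
  transitivity (e + g + (e + e) + g); [assoc|]; rewrite He.
  transitivity (e + g + (e + g)); [assoc|]; auto.
Qed.

Lemma Jle_add_r e g : e + e = e -> g + g = g -> Jle (e + g) g.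
Proof.
  unfold Jle; intros He Hg.
  transitivity (e + (g + g) + e + g); [assoc|]; rewrite Hg.
  transitivity (e + g + (e + g)); [assoc|]; auto.
Qed.

Lemma Jle_add_mono_l e f g : e + e = e -> f + f = f -> g + g = g ->
  Jle e f -> Jle (e + g) (f + g).
Proof.
  intros He Hf Hg Hef; apply Jle_add; auto using Jle_add_r.
  apply (Jle_trans _ e); auto using Jle_add_l.
Qed.

Lemma Jle_add_mono_r e f g : e + e = e -> f + f = f -> g + g = g ->
  Jle e f -> Jle (g + e) (g + f).
Proof.
  intros He Hf Hg Hef; apply Jle_add; auto using Jle_add_l.
  apply (Jle_trans _ e); auto using Jle_add_r.
Qed.

Lemma Jle_add_comm e f : e + e = e -> f + f = f -> Jle (e + f) (f + e).
Proof. intros He Hf; apply Jle_add; auto using Jle_add_l, Jle_add_r. Qed.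

End Band.

Section Forward.
Hypothesis qcr : quasi_completely_regular add mul.
Hypothesis idem_closed : closed_add add (Eplus add (fun _ => True)).

Lemma idem_add e f : e + e = e -> f + f = f -> e + f + (e + f) = e + f.
Proof. intros He Hf; exact (proj2 (idem_closed e f (conj I He) (conj I Hf))). Qed.

Lemma exists_group_idem a : exists e, group_idem a e /\ a * e = e.
Proof.
  destruct (qcr a) as (n & Hn & x & _ & Hx & Hcomm & Habs).
  set (c := nsum add n a) in *.
  assert (Hc : in_group (c + x) c).
  { split; [|split; [|split]].
    - transitivity (c + x + c + x); [assoc|]; rewrite <- Hx; reflexivity.
    - symmetry; exact Hx.
    - rewrite Hcomm, addA; symmetry; exact Hx.
    - exists x; split; [reflexivity | symmetry; exact Hcomm]. }
  exists (c + x); split; [exists n; split; assumption|].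
  assert (Hidem : a * (c + x) + a * (c + x) = a * (c + x)).
  { rewrite <- mulDr; destruct Hc as [He _]; rewrite He; reflexivity. }
  rewrite <- (nsum_idem n _ Hidem), <- mul_nsum_l; exact Habs.
Qed.

Definition gidem (a : T) : T :=
  proj1_sig (constructive_indefinite_description _ (exists_group_idem a)).

Lemma gidem_spec a : group_idem a (gidem a) /\ a * gidem a = gidem a.
Proof. exact (proj2_sig (constructive_indefinite_description _ (exists_group_idem a))). Qed.

Lemma group_idem_gidem a : group_idem a (gidem a).
Proof. apply gidem_spec. Qed.

Lemma mul_gidem a : a * gidem a = gidem a.
Proof. apply gidem_spec. Qed.

Lemma gidem_eq a e : group_idem a e -> gidem a = e.
Proof. apply group_idem_unique, group_idem_gidem. Qed.

Lemma gidem_idem a : gidem a + gidem a = gidem a.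
Proof. destruct (group_idem_gidem a) as (n & _ & He & _); exact He. Qed.

Lemma gidem_of_idem e : e + e = e -> gidem e = e.
Proof. intros He; apply gidem_eq, group_idem_of_in_group, in_group_idem, He. Qed.

Lemma gidem_gidem a : gidem (gidem a) = gidem a.
Proof. apply gidem_of_idem, gidem_idem. Qed.

Lemma idem_mul_self e : e + e = e -> e * e = e.
Proof. intros He; rewrite <- (gidem_of_idem e He) at 2 3; apply mul_gidem. Qed.

Lemma gidem_mul_idem a : gidem a * gidem a = gidem a.
Proof. apply idem_mul_self, gidem_idem. Qed.

Lemma gidem_mul_l s t : gidem (s * t) = gidem s * t.
Proof.
  apply gidem_eq; destruct (group_idem_gidem s) as (n & Hn & Hs).
  exists n; split; [exact Hn|]; rewrite <- mul_nsum_l; apply in_group_mul_l, Hs.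
Qed.

Lemma gidem_mul_r s t : gidem (s * t) = s * gidem t.
Proof.
  apply gidem_eq; destruct (group_idem_gidem t) as (n & Hn & Ht).
  exists n; split; [exact Hn|]; rewrite <- mul_nsum_r; apply in_group_mul_r, Ht.
Qed.

Lemma gidem_mul s t : gidem (s * t) = gidem s * gidem t.
Proof.
  rewrite gidem_mul_l, <- (gidem_gidem s) at 1.
  rewrite <- gidem_mul_l, gidem_mul_r; reflexivity.
Qed.

Lemma gidem_sq a : gidem (a * a) = gidem a.
Proof. rewrite gidem_mul_r; apply mul_gidem. Qed.

(* As [gidem x = x * gidem x] and [gidem] is multiplicative,
   [gidem (a + b)] is the square of [gidem a + gidem b]. *)
Lemma gidem_add a b : gidem (a + b) = gidem a + gidem b.
Proof.
  transitivity (gidem a * a + gidem a * b + (gidem b * a + gidem b * b)).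
  { rewrite <- (mul_gidem (a + b)), mulDl, <- !gidem_mul_r, !gidem_mul_l, !mulDr; reflexivity. }
  rewrite <- !gidem_mul_l, !gidem_sq, !gidem_mul.
  transitivity ((gidem a + gidem b) * (gidem a + gidem b)).
  { rewrite mulDl, !mulDr, !gidem_mul_idem; reflexivity. }
  apply idem_mul_self, idem_add; apply gidem_idem.
Qed.

Lemma gidem_nsum n a : 0 < n -> gidem (nsum add n a) = gidem a.
Proof.
  intros Hn; apply gidem_eq; destruct (group_idem_gidem a) as (m & Hm & Ha).
  exists m; split; [exact Hm|]; rewrite nsum_comm by assumption; apply in_group_nsum; assumption.
Qed.

Lemma gidem_of_in_group e c : in_group e c -> gidem c = e.
Proof. intros Hc; apply gidem_eq, group_idem_of_in_group, Hc. Qed.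

Lemma idem_sum_gidem a b : a + b + (a + b) = a + b -> a + b = gidem a + gidem b.
Proof. intros Hab; rewrite <- gidem_add; symmetry; apply gidem_of_idem, Hab. Qed.

Lemma in_group_gidem z : add_regular add z -> in_group (gidem z) z.
Proof.
  intros [w Hw]; set (e := gidem z).
  assert (Hzw : z + w = e + gidem w).
  { apply idem_sum_gidem; transitivity (z + w + z + w); [assoc|]; rewrite <- Hw; reflexivity. }
  assert (Hwz : w + z = gidem w + e).
  { apply idem_sum_gidem; transitivity (w + (z + w + z)); [assoc|]; rewrite <- Hw; reflexivity. }
  assert (Hewe : e + gidem w + e = e).
  { unfold e; rewrite <- !gidem_add, <- Hw; reflexivity. }
  assert (Hez : e + z = z).
  { rewrite Hw at 1; transitivity (e + (z + w) + z); [assoc|].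
    rewrite Hzw; transitivity (e + e + gidem w + z); [assoc|].
    unfold e; rewrite gidem_idem; fold e; rewrite <- Hzw; symmetry; exact Hw. }
  assert (Hze : z + e = z).
  { rewrite Hw at 1; transitivity (z + (w + z) + e); [assoc|].
    rewrite Hwz; transitivity (z + (gidem w + (e + e))); [assoc|].
    unfold e; rewrite gidem_idem; fold e; rewrite <- Hwz, addA; symmetry; exact Hw. }
  split; [apply gidem_idem|]. split; [exact Hez|]. split; [exact Hze|].
  exists (e + w + e); split.
  - transitivity (z + e + w + e); [assoc|]; rewrite Hze, Hzw; exact Hewe.
  - transitivity (e + (w + (e + z))); [assoc|]; rewrite Hez, Hwz, addA; exact Hewe.
Qed.

Lemma qcr_add_quasi_regular : add_quasi_regular add.
Proof.
  intros a; destruct (group_idem_gidem a) as (n & Hn & Ha).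
  exists n; split; [exact Hn | eapply in_group_regular, Ha].
Qed.

Lemma in_group_gidem_nsum a n : 0 < n -> add_regular add (nsum add n a) ->
  in_group (gidem a) (nsum add n a).
Proof. intros Hn Hr; rewrite <- (gidem_nsum n a Hn); apply in_group_gidem, Hr. Qed.

Lemma Hstar_sq b : Hstar add (b * b) b.
Proof.
  destruct (qcr_add_quasi_regular (b * b)) as (n0 & Hn0 & Hr0).
  destruct (qcr_add_quasi_regular b) as (m0 & Hm0 & Hr1).
  destruct (is_m_exists _ _ Hn0 Hr0) as [n Hn], (is_m_exists _ _ Hm0 Hr1) as [m Hm].
  assert (Hsq : in_group (gidem b) (nsum add n (b * b))).
  { rewrite <- gidem_sq; apply in_group_gidem_nsum; apply Hn. }
  assert (Hb : in_group (gidem b) (nsum add m b)) by (apply in_group_gidem_nsum; apply Hm).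
  split; exists n, m; (split; [apply Hn|]); (split; [apply Hm|]).
  - apply (in_group_Lplus (gidem b)); assumption.
  - apply (in_group_Rplus (gidem b)); assumption.
Qed.

Lemma regular_double a x : a = a + x + a -> a = a + nsum add 2 x + nsum add 2 a.
Proof.
  intros Hx; change (a = a + (x + x) + (a + a)).
  assert (Hax : a + x = gidem a + gidem x).
  { apply idem_sum_gidem; transitivity (a + x + a + x); [assoc|]; rewrite <- Hx; reflexivity. }
  assert (Hxa : x + a = gidem x + gidem a).
  { apply idem_sum_gidem; transitivity (x + (a + x + a)); [assoc|]; rewrite <- Hx; reflexivity. }
  assert (Hea : gidem a + a = a) by apply (in_group_gidem a (ex_intro _ x Hx)).
  assert (Hexe : gidem a + gidem x + gidem a = gidem a)
    by (rewrite <- !gidem_add, <- Hx; reflexivity).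
  symmetry; transitivity (a + x + (x + a) + a); [assoc|]; rewrite Hax, Hxa.
  transitivity (gidem a + (gidem x + gidem x) + gidem a + a); [assoc|].
  rewrite gidem_idem, Hexe; exact Hea.
Qed.

Lemma conditions_of_qcr : add_quasi_regular add /\ (forall b, Hstar add (b * b) b) /\
  (forall a x, a = a + x + a -> a = a + nsum add 2 x + nsum add 2 a) /\
  closed_add add (RegPlus add).
Proof.
  split; [exact qcr_add_quasi_regular|]; split; [exact Hstar_sq|].
  split; [exact regular_double | exact (regular_add idem_add)].
Qed.

Definition rho (a b : T) : Prop := Jle (gidem a) (gidem b) /\ Jle (gidem b) (gidem a).

Lemma rho_of_gidem_eq a b : gidem a = gidem b -> rho a b.
Proof. intros Hab; unfold rho; rewrite Hab; split; apply Jle_refl, gidem_idem. Qed.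

Lemma rho_refl a : rho a a.
Proof. apply rho_of_gidem_eq; reflexivity. Qed.

Lemma rho_sym a b : rho a b -> rho b a.
Proof. intros [Hab Hba]; split; assumption. Qed.

Lemma rho_trans a b c : rho a b -> rho b c -> rho a c.
Proof.
  intros [Hab Hba] [Hbc Hcb]; split;
    apply (Jle_trans idem_add _ (gidem b)); auto using gidem_idem.
Qed.

Lemma rho_add a b c d : rho a b -> rho c d -> rho (a + c) (b + d).
Proof.
  intros [Hab Hba] [Hcd Hdc]; pose proof gidem_idem as Hi.
  apply (rho_trans _ (b + c)); unfold rho; rewrite !gidem_add; split.
  - apply (Jle_add_mono_l idem_add); auto.
  - apply (Jle_add_mono_l idem_add); auto.
  - apply (Jle_add_mono_r idem_add); auto.
  - apply (Jle_add_mono_r idem_add); auto.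
Qed.

Lemma rho_mul a b c d : rho a b -> rho c d -> rho (a * c) (b * d).
Proof.
  intros [Hab Hba] [Hcd Hdc]; apply (rho_trans _ (b * c)); unfold rho; rewrite !gidem_mul;
    split; auto using Jle_mul_l, Jle_mul_r.
Qed.

Lemma rho_sq a : rho (a * a) a.
Proof. apply rho_of_gidem_eq, gidem_sq. Qed.

Lemma rho_double a : rho (a + a) a.
Proof. apply rho_of_gidem_eq; rewrite gidem_add; apply gidem_idem. Qed.

Lemma rho_add_comm a b : rho (a + b) (b + a).
Proof. unfold rho; rewrite !gidem_add; split; apply (Jle_add_comm idem_add); apply gidem_idem. Qed.

Lemma rho_class_add a b c : rho a b -> rho a c -> rho a (b + c).
Proof.
  intros Hb Hc; apply (rho_trans _ (a + a));
    [apply rho_sym, rho_double | apply rho_add; assumption].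
Qed.

Lemma rho_class_mul a b c : rho a b -> rho a c -> rho a (b * c).
Proof.
  intros Hb Hc; apply (rho_trans _ (a * a)); [apply rho_sym, rho_sq | apply rho_mul; assumption].
Qed.

Lemma gidem_in_right_ideal x : exists t, x + t = gidem x.
Proof.
  destruct (group_idem_gidem x) as ([|[|n]] & Hn & _ & _ & _ & y & Hy & _); [lia| |].
  - exists y; exact Hy.
  - exists (nsum add (S n) x + y); rewrite addA, <- nsum_succ_l by lia; exact Hy.
Qed.

Lemma gidem_in_left_ideal x : exists t, t + x = gidem x.
Proof.
  destruct (group_idem_gidem x) as ([|[|n]] & Hn & _ & _ & _ & y & _ & Hy); [lia| |].
  - exists y; exact Hy.
  - exists (y + nsum add (S n) x); rewrite <- addA, <- nsum_succ by lia; exact Hy.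
Qed.

Lemma regular_add_Jle_l b x : add_regular add b -> Jle (gidem b) (gidem x) ->
  add_regular add (b + x).
Proof.
  unfold Jle; intros Hb Hle.
  destruct (in_group_gidem b Hb) as (_ & Heb & Hbe & y & Hby & _).
  destruct (gidem_in_right_ideal x) as [t Ht].
  set (eb := gidem b) in *; set (ex := gidem x) in *.
  assert (Hl : eb + ex + (b + x) = b + x).
  { rewrite <- Heb at 1; transitivity ((eb + ex + eb) + b + x); [assoc|].
    rewrite Hle, Heb; reflexivity. }
  assert (Hr : b + x + (t + eb + y + ex) = eb + ex).
  { transitivity (b + (x + t) + eb + y + ex); [assoc|]; rewrite Ht.
    rewrite <- Hbe at 1; transitivity (b + (eb + ex + eb) + y + ex); [assoc|].
    rewrite Hle, Hbe, Hby; reflexivity. }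
  exists (t + eb + y + ex); rewrite Hr; symmetry; exact Hl.
Qed.

Lemma regular_add_Jle_r b x : add_regular add b -> Jle (gidem b) (gidem x) ->
  add_regular add (x + b).
Proof.
  unfold Jle; intros Hb Hle.
  destruct (in_group_gidem b Hb) as (_ & Heb & Hbe & y & _ & Hyb).
  destruct (gidem_in_left_ideal x) as [t Ht].
  set (eb := gidem b) in *; set (ex := gidem x) in *.
  assert (Hr : x + b + (ex + eb) = x + b).
  { rewrite <- Hbe at 1; transitivity (x + b + (eb + ex + eb)); [assoc|].
    rewrite Hle, <- addA, Hbe; reflexivity. }
  assert (Hl : ex + y + eb + t + (x + b) = ex + eb).
  { transitivity (ex + y + eb + (t + x) + b); [assoc|]; rewrite Ht.
    rewrite <- Heb; transitivity (ex + y + (eb + ex + eb) + b); [assoc|].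
    rewrite Hle, <- (addA _ eb b), Heb, <- addA, Hyb; reflexivity. }
  exists (ex + y + eb + t); symmetry.
  transitivity (x + b + (ex + y + eb + t + (x + b))); [assoc|]; rewrite Hl; exact Hr.
Qed.

Definition kernel (a b : T) : Prop := rho a b /\ add_regular add b.

Lemma kernel_add a b c : kernel a b -> kernel a c -> kernel a (b + c).
Proof.
  intros [Hb Rb] [Hc Rc]; split; [apply rho_class_add | apply (regular_add idem_add)]; assumption.
Qed.

Lemma kernel_mul a b c : kernel a b -> kernel a c -> kernel a (b * c).
Proof.
  intros [Hb Rb] [Hc Rc]; split; [apply rho_class_mul; assumption | apply regular_mul_l, Rb].
Qed.

Lemma kernel_subsemiring a : subsemiring add mul (kernel a).
Proof. split; [intros b c; apply kernel_add | apply kernel_mul]. Qed.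

Lemma kernel_of_in_group a b e c : kernel a b -> in_group e c -> e = gidem b -> kernel a c.
Proof.
  intros [Hb _] Hc He; split; [|eapply in_group_regular, Hc].
  apply (rho_trans _ b); [exact Hb|]; apply rho_of_gidem_eq.
  rewrite (gidem_of_in_group _ _ Hc); symmetry; exact He.
Qed.

Lemma kernel_cregular a b : kernel a b -> cregular_in add mul (kernel a) b.
Proof.
  intros Kb; pose proof (in_group_gidem b (proj2 Kb)) as Hb.
  destruct (in_group_inverse _ _ Hb) as (y & Hy & Hby & Hyb).
  exists y; split; [apply (kernel_of_in_group a b (gidem b)); auto|].
  destruct Hb as (_ & Heb & _); rewrite Hby; split; [symmetry; exact Heb|].
  split; [congruence | apply mul_gidem].
Qed.

Lemma kernel_factor a b c : kernel a b -> kernel a c ->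
  exists u v, kernel a u /\ kernel a v /\ b = u + c + v.
Proof.
  intros Kb Kc.
  destruct (in_group_inverse _ _ (in_group_gidem c (proj2 Kc))) as (c' & Hc' & _ & Hc'c).
  assert (Kc' : kernel a c') by (apply (kernel_of_in_group a c (gidem c)); auto).
  destruct (rho_trans _ _ _ (rho_sym _ _ (proj1 Kb)) (proj1 Kc)) as [Hle _].
  destruct (in_group_gidem b (proj2 Kb)) as (Heb & _ & Hbe & _).
  exists (b + c'), (gidem b); split; [apply kernel_add; assumption|].
  split; [apply (kernel_of_in_group a b (gidem b)); auto using in_group_idem|].
  transitivity (b + (c' + c) + gidem b); [|assoc]; rewrite Hc'c.
  rewrite <- Hbe at 1.
  transitivity (b + (gidem b + gidem c + gidem b)); [rewrite Hle; reflexivity|].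
  rewrite !addA, Hbe; reflexivity.
Qed.

Lemma kernel_Jplus a b c : kernel a b -> kernel a c -> Jplus_in add (kernel a) b c.
Proof.
  intros Kb Kc w; split.
  - destruct (kernel_factor a b c Kb Kc) as (u & v & Ku & Kv & Hb).
    apply (in_ideal_sub _ b c u v); auto; intros x y; apply kernel_add.
  - destruct (kernel_factor a c b Kc Kb) as (u & v & Ku & Kv & Hc).
    apply (in_ideal_sub _ c b u v); auto; intros x y; apply kernel_add.
Qed.

Lemma kernel_rect_skew_ring a : rect_skew_ring add mul (kernel a).
Proof.
  split; [split; [apply kernel_subsemiring|]; split; [apply kernel_cregular | apply kernel_Jplus]|].
  intros e f [Ke He] [Kf Hf]; split; [apply kernel_add | apply idem_add]; assumption.
Qed.

Lemma kernel_nil_extension a : nil_extension add mul (rho a) (kernel a).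
Proof.
  split; [apply kernel_subsemiring|]; split; [intros b []; assumption|]; split.
  - intros b x [Hb Rb] Hx.
    destruct (rho_trans _ _ _ (rho_sym _ _ Hb) Hx) as [Hle _].
    refine (conj (conj _ _) (conj (conj _ _) (conj (conj _ _) (conj _ _))));
      auto using rho_class_add, rho_class_mul, regular_add_Jle_l, regular_add_Jle_r,
      regular_mul_l, regular_mul_r.
  - intros c Hc; destruct (group_idem_gidem c) as (n & Hn & Hgc).
    exists n; split; [exact Hn|]; split; [|eapply in_group_regular, Hgc].
    apply (rho_trans _ c); [exact Hc|]; apply rho_of_gidem_eq; symmetry; apply gidem_nsum, Hn.
Qed.

Lemma blattice_of_qcr : blattice_of_nilext_rsr add mul.
Proof.
  exists rho; split; [exact rho_refl|]; split; [exact rho_sym|]; split; [exact rho_trans|].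
  split; [exact rho_add|]; split; [exact rho_mul|]; split; [exact rho_sq|].
  split; [exact rho_double|]; split; [exact rho_add_comm|].
  intros a; split; [split; [intros b c; apply rho_class_add | apply rho_class_mul]|].
  exists (kernel a); split; [apply kernel_rect_skew_ring | apply kernel_nil_extension].
Qed.

End Forward.

Section Backward.
Hypothesis add_qr : add_quasi_regular add.
Hypothesis sq_Hstar : forall b, Hstar add (b * b) b.
Hypothesis double_cond : forall a x, a = a + x + a -> a = a + nsum add 2 x + nsum add 2 a.
Hypothesis regular_closed : closed_add add (RegPlus add).

Lemma double_cond_sum a x : a = a + x + a -> a = a + (x + x) + (a + a).
Proof. exact (double_cond a x). Qed.

Lemma idem_add_of_regular_add e f : e + e = e -> f + f = f -> e + f + (e + f) = e + f.
Proof.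
  intros He Hf; destruct (regular_closed e f (idem_regular e He) (idem_regular f Hf)) as [w Hw].
  assert (Hx : e + f = e + f + (f + w + e) + (e + f)).
  { transitivity (e + f + w + (e + f)); [exact Hw|].
    transitivity (e + (f + f) + w + (e + e) + f); [rewrite He, Hf; assoc | assoc]. }
  assert (Hsq : e + f + (f + w + e + (f + w + e)) + (e + f + (e + f)) = e + f + (e + f)).
  { transitivity (e + (f + f) + w + e + f + w + (e + e) + f + e + f); [assoc|]; rewrite He, Hf.
    transitivity (e + f + w + (e + f) + w + (e + f) + (e + f)); [assoc|].
    rewrite <- !Hw; reflexivity. }
  symmetry; rewrite (double_cond_sum _ _ Hx) at 1; exact Hsq.
Qed.

Lemma in_group_of_regular a : add_regular add a -> exists e, in_group e a.
Proof.
  intros [x Hx]; destruct (regular_inverse a x Hx) as [Hax' Hx'].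
  set (x' := x + a + x) in *; clearbody x'.
  assert (Hv : a = a + (x + x) + a + a).
  { rewrite (double_cond_sum _ _ Hx) at 1; assoc. }
  assert (Hu : a = a + a + (x' + x' + a)).
  { rewrite Hax' at 1; rewrite (double_cond_sum _ _ Hx') at 1.
    transitivity ((a + x' + a) + a + x' + x' + a); [assoc|]; rewrite <- Hax'; assoc. }
  exists (a + (x' + x' + a)); apply (in_group_of_double _ _ (a + (x + x))); assumption.
Qed.

Lemma idem_mul_self_of_Hstar e : e + e = e -> e * e = e.
Proof.
  intros He; assert (Hee : e * e + e * e = e * e) by (rewrite <- mulDl, He; reflexivity).
  destruct (sq_Hstar e) as [(n & m & _ & _ & HL) (n' & m' & _ & _ & HR)].
  rewrite (nsum_idem n _ Hee), (nsum_idem m _ He) in HL.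
  rewrite (nsum_idem n' _ Hee), (nsum_idem m' _ He) in HR.
  assert (Hl : e + e * e = e).
  { destruct (proj2 (HL e) (or_introl eq_refl)) as [E|[s [_ E]]].
    - rewrite <- E; exact He.
    - rewrite E at 1; rewrite <- addA, Hee; symmetry; exact E. }
  assert (Hr : e + e * e = e * e).
  { destruct (proj1 (HR (e * e)) (or_introl eq_refl)) as [E|[s [_ E]]].
    - rewrite E; exact He.
    - rewrite E, addA, He; reflexivity. }
  congruence.
Qed.

Lemma mul_in_group_idem e c : in_group e c -> c * e = e.
Proof.
  intros Hc; destruct (sq_Hstar c) as [(n & m & Hn & Hm & HL) _].
  rewrite <- mul_nsum_r in HL.
  destruct (in_group_nsum _ _ n Hc (proj1 Hn)) as (_ & _ & Hse & _).
  destruct (in_group_nsum _ _ m Hc (proj1 Hm)) as (_ & _ & _ & y & _ & Hy).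
  set (s := nsum add n c) in *.
  assert (Hd : exists d, d + c * s = e).
  { destruct (proj2 (HL (nsum add m c)) (or_introl eq_refl)) as [E|[t [_ E]]].
    - exists y; rewrite <- E; exact Hy.
    - exists (y + t); rewrite <- addA, <- E; exact Hy. }
  destruct Hd as [d Hd].
  assert (Hcse : c * s + c * e = c * s) by (rewrite <- mulDr, Hse; reflexivity).
  assert (Hece : e + c * e = e) by (rewrite <- Hd at 1; rewrite <- addA, Hcse; exact Hd).
  destruct Hc as (He & Hec & _).
  rewrite <- Hec at 1; rewrite mulDl, idem_mul_self_of_Hstar by exact He; exact Hece.
Qed.

Lemma qcr_of_conditions : quasi_completely_regular add mul.
Proof.
  intros a; destruct (add_qr a) as (n & Hn & Hr).
  destruct (in_group_of_regular _ Hr) as [e He].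
  pose proof (mul_in_group_idem e _ He) as Hce.
  destruct He as (_ & Hec & _ & y & Hcy & Hyc).
  exists n; split; [exact Hn|]; exists y; split; [exact I|].
  rewrite Hcy; split; [symmetry; exact Hec | split; [congruence | exact Hce]].
Qed.

End Backward.
End Semiring.

Lemma qcr_of_blattice {T : Type} (add mul : T -> T -> T) :
  blattice_of_nilext_rsr add mul -> quasi_completely_regular add mul.
Proof.
  intros (r & Hrefl & _ & _ & _ & _ & _ & _ & _ & Hclass) a.
  destruct (Hclass a) as (_ & K & ((_ & HK & _) & _) & _ & _ & _ & Hnil).
  destruct (Hnil a (Hrefl a)) as (n & Hn & Ka).
  destruct (HK _ Ka) as (x & _ & Hx).
  exists n; split; [exact Hn|]; exists x; split; [exact I | exact Hx].
Qed.

Theorem theorem3p6 (T : Type) (add mul : T -> T -> T)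
  (hS : is_semiring add mul) :
  let E := Eplus add (fun _ : T => True) in
  ((quasi_completely_regular add mul /\ closed_add add E) <->
   (add_quasi_regular add /\
    (forall b, Hstar add (mul b b) b) /\
    (forall a x : T, a = add (add a x) a ->
        a = add (add a (nsum add 2 x)) (nsum add 2 a)) /\
    closed_add add (RegPlus add)))
  /\
  ((quasi_completely_regular add mul /\ closed_add add E) <->
   (blattice_of_nilext_rsr add mul /\ closed_add add E)).
Proof.
  intros E; destruct hS as (addA & _ & mulDr & mulDl).
  split; split.
  - intros [qcr idem_closed]; apply conditions_of_qcr; assumption.
  - intros (add_qr & sq_Hstar & double_cond & regular_closed).
    split; [apply qcr_of_conditions; assumption|].
    intros e f [_ He] [_ Hf]; split; [exact I | apply idem_add_of_regular_add; assumption].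
  - intros [qcr idem_closed]; split; [apply blattice_of_qcr; assumption | exact idem_closed].
  - intros [hB idem_closed]; split; [apply qcr_of_blattice, hB | exact idem_closed].
Qed.
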